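(* For integers $n\ge 1$ and $0\le k\le n$, the number of ordered pairs $(P,Q)$ of $n$-step walks starting at the origin, each step being $(1,0)$ (E) or $(0,1)$ (N), whose vertex sets have exactly $k$ points in common other than the origin, is $2^k\binom{2n-k}{n}$.
   Context: An $n$-step walk starting at the origin is a sequence of lattice points $v_0=(0,0),v_1,\dots,v_n$ with $v_i-v_{i-1}\in\{(1,0),(0,1)\}$; its vertex set is $\{v_0,\dots,v_n\}$. The endpoints of the two walks are not required to coincide. *)

From mathcomp Require Import all_boot.
Set Implicit Arguments. Unset Strict Implicit. Unset Printing Implicit Defensive.

(* A step is a bool: true = E = (1,0), false = N = (0,1).
   An n-step walk from the origin is an n.-tuple of steps. *)

Definition vertex (s : seq bool) (i : nat) : nat * nat :=
  (count id (take i s), count negb (take i s)).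

Definition vertices (s : seq bool) : seq (nat * nat) :=
  [seq vertex s i | i <- iota 0 (size s).+1].

Definition common_nonorigin (s t : seq bool) : nat :=
  size (undup [seq p <- vertices s | (p != (0, 0)) && (p \in vertices t)]).

From mathcomp Require Import all_boot zify.
Set Implicit Arguments. Unset Strict Implicit. Unset Printing Implicit Defensive.

(* After i steps both walks lie on the antidiagonal x + y = i, so a common
   vertex other than the origin is a time i in 1..n at which both walks have
   taken equally many E-steps.  Let N_m(D, k) count the pairs of m-step walks
   whose E-counts start D apart and agree exactly k times.  Conditioning on the
   first pair of steps gives a linear recursion in m, and Pascal's rule shows
   that 2^(k-1) C(2m+1-k, m+D) for D, k > 0 and 2^k C(2m-k, m) for D = 0,
   0 < k <= m satisfy it.  The remaining value N_m(0, 0) is then forced by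
   sum_k N_m(0, k) = 4^m = sum_k 2^k C(2m-k, m). *)

Fixpoint meetings (a b : nat) (s t : seq bool) : nat :=
  match s, t with
  | x :: s', y :: t' => ((a + x == b + y) : nat) + meetings (a + x) (b + y) s' t'
  | _, _ => 0
  end.

Lemma meetings_shift j a b s t : meetings (a + j) (b + j) s t = meetings a b s t.
Proof.
elim: s a b t => [|x s IH] a b [|y t] //=.
by rewrite (addnAC a) (addnAC b) eqn_add2r IH.
Qed.

Lemma meetings_sym a b s t : meetings a b s t = meetings b a t s.
Proof. by elim: s a b t => [|x s IH] a b [|y t] //=; rewrite IH eq_sym. Qed.

Lemma meetings_le_size a b s t : meetings a b s t <= size s.
Proof.
elim: s a b t => [|x s IH] a b [|y t] //=.
by rewrite -addn1 addnC leq_add // leq_b1.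
Qed.

Lemma meetingsE a b s t : size s = size t ->
  meetings a b s t =
  count (fun i => a + count id (take i s) == b + count id (take i t)) (iota 1 (size s)).
Proof.
elim: s a b t => [|x s IH] a b [|y t] //= [/IH ->]; rewrite !take0 /= !addn0.
congr (_ + _); rewrite (iotaDl 1 1) count_map; apply: eq_count => i /=.
by rewrite !addnA.
Qed.

Lemma vertex_antidiag s i : i <= size s -> (vertex s i).1 + (vertex s i).2 = i.
Proof. by move=> le_i_s; rewrite /= count_predC size_takel. Qed.

Lemma vertex_eq s t i : i <= size s -> i <= size t ->
  (vertex s i == vertex t i) = (count id (take i s) == count id (take i t)).
Proof.
move=> /vertex_antidiag vs /vertex_antidiag vt; rewrite xpair_eqE /=.
by case: eqP => //= E; apply/eqP; move: vs vt; rewrite /= E; lia.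
Qed.

Lemma uniq_vertices s : uniq (vertices s).
Proof.
rewrite map_inj_in_uniq ?iota_uniq // => i j; rewrite !mem_iota !add0n !ltnS.
move=> /andP[_ /vertex_antidiag vi] /andP[_ /vertex_antidiag vj] eq_ij.
by rewrite -[LHS]vi -[RHS]vj eq_ij.
Qed.

Lemma mem_vertices s t i : i <= size s -> size s = size t ->
  (vertex s i \in vertices t) = (vertex s i == vertex t i).
Proof.
move=> le_i_s eq_st; apply/mapP/eqP => [[j]|->]; last by exists i; rewrite // mem_iota -eq_st; lia.
rewrite mem_iota add0n ltnS => /andP[_ le_j_t] eq_ij.
have := vertex_antidiag le_i_s; have := vertex_antidiag le_j_t.
move=> vj vi; have ij : i = j by rewrite -vi -vj eq_ij.
by rewrite ij in eq_ij *.
Qed.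

Lemma common_nonorigin_meetings s t : size s = size t ->
  common_nonorigin s t = meetings 0 0 s t.
Proof.
move=> eq_st; rewrite meetingsE // /common_nonorigin undup_id ?filter_uniq ?uniq_vertices //.
rewrite size_filter [vertices s]/vertices count_map -[iota 0 _]/(0 :: iota 1 (size s)).
rewrite /= {1}/vertex take0 eqxx add0n; apply: eq_in_count => i.
rewrite mem_iota add1n ltnS => /andP[gt0_i le_i_s].
have vs := vertex_antidiag le_i_s.
have nz : vertex s i != (0, 0) by apply: contraTneq gt0_i => v0; rewrite -vs v0.
by rewrite /= nz mem_vertices // vertex_eq // -eq_st.
Qed.

Lemma big_tuple_cons n (F : n.+1.-tuple bool -> nat) :
  \sum_(t : n.+1.-tuple bool) F t =
  \sum_(x : bool) \sum_(t : n.-tuple bool) F [tuple of x :: t].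
Proof.
rewrite pair_bigA (reindex (fun p : bool * n.-tuple bool => [tuple of p.1 :: p.2])) //.
exists (fun t : n.+1.-tuple bool => (thead t, [tuple of behead t])).
  by move=> [x t] _; congr (_, _); apply: val_inj.
by move=> t _; rewrite [in RHS](tuple_eta t).
Qed.

Definition meet_pairs m a b k :=
  \sum_(P : m.-tuple bool) \sum_(Q : m.-tuple bool) ((meetings a b P Q == k) : nat).

Lemma meet_pairs0 a b k : meet_pairs 0 a b k = (k == 0).
Proof.
rewrite /meet_pairs (big_pred1 [tuple]) ?(big_pred1 [tuple]) 1?eq_sym //.
all: by move=> t; have -> := tuple0 t; rewrite /= eqxx.
Qed.

Definition meet_pairs_from m a b k :=
  if a == b then (if k is k'.+1 then meet_pairs m a b k' else 0) else meet_pairs m a b k.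

Lemma meet_pairsS m a b k : meet_pairs m.+1 a b k =
  meet_pairs_from m a.+1 b.+1 k + meet_pairs_from m a.+1 b k +
  meet_pairs_from m a b.+1 k + meet_pairs_from m a b k.
Proof.
have first_steps : meet_pairs m.+1 a b k =
    \sum_(x : bool) \sum_(y : bool) meet_pairs_from m (a + x) (b + y) k.
  rewrite /meet_pairs big_tuple_cons; apply: eq_bigr => x _.
  rewrite exchange_big big_tuple_cons; apply: eq_bigr => y _.
  rewrite exchange_big /meet_pairs_from.
  have [meet|/negbTE ne] := eqVneq (a + x) (b + y); last first.
    by apply: eq_bigr => P _; apply: eq_bigr => Q _; rewrite /= ne.
  case: k => [|k].
    by apply: big1 => P _; apply: big1 => Q _; rewrite /= meet eqxx.
  by apply: eq_bigr => P _; apply: eq_bigr => Q _; rewrite /= meet eqxx.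
by rewrite first_steps !big_bool /= !addn1 !addn0 addnA.
Qed.

Lemma meet_pairs_shift m a b k : meet_pairs m a.+1 b.+1 k = meet_pairs m a b k.
Proof.
by apply: eq_bigr => P _; apply: eq_bigr => Q _; rewrite -(addn1 a) -(addn1 b) meetings_shift.
Qed.

Lemma meet_pairs_sym m a b k : meet_pairs m a b k = meet_pairs m b a k.
Proof.
rewrite /meet_pairs exchange_big; apply: eq_bigr => P _; apply: eq_bigr => Q _.
by rewrite meetings_sym.
Qed.

Lemma meet_pairs_eq0 m a b k : m < k -> meet_pairs m a b k = 0.
Proof.
move=> lt_m_k; apply: big1 => P _; apply: big1 => Q _.
have := meetings_le_size a b P Q; rewrite size_tuple.
by case: eqP => // ->; rewrite leqNgt lt_m_k.
Qed.

Lemma sum_meet_pairs m a b : \sum_(k < m.+1) meet_pairs m a b k = 4 ^ m.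
Proof.
rewrite exchange_big /=; under eq_bigr => P _ do rewrite exchange_big /=.
have one_k (P Q : m.-tuple bool) : \sum_(k < m.+1) ((meetings a b P Q == k) : nat) = 1.
  have le_mt : meetings a b P Q < m.+1.
    by have := meetings_le_size a b P Q; rewrite size_tuple ltnS.
  rewrite (bigD1 (Ordinal le_mt)) //= eqxx big1 // => i ne_i.
  by apply/eqP; rewrite eqb0; apply: contra ne_i => /eqP E; apply/eqP/val_inj.
under eq_bigr => P _ do under eq_bigr => Q _ do rewrite one_k.
by rewrite !sum_nat_const card_tuple card_bool muln1 -expnMn.
Qed.

Lemma meet_pairsS_same m k :
  meet_pairs m.+1 0 0 k.+1 = 2 * meet_pairs m 0 0 k + 2 * meet_pairs m 0 1 k.+1.
Proof. rewrite meet_pairsS /meet_pairs_from /= (meet_pairs_sym m 1 0) meet_pairs_shift; lia. Qed.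

Lemma meet_pairsS_adjacent m k : meet_pairs m.+1 0 1 k.+1 =
  2 * meet_pairs m 0 1 k.+1 + meet_pairs m 0 2 k.+1 + meet_pairs m 0 0 k.
Proof. rewrite meet_pairsS /meet_pairs_from /= !meet_pairs_shift; lia. Qed.

Lemma meet_pairsS_apart m D k : meet_pairs m.+1 0 D.+2 k =
  2 * meet_pairs m 0 D.+2 k + meet_pairs m 0 D.+3 k + meet_pairs m 0 D.+1 k.
Proof. rewrite meet_pairsS /meet_pairs_from /= !meet_pairs_shift; lia. Qed.

Lemma sum_exp2_bin n r :
  \sum_(k < n.+1) 2 ^ k * 'C(n + r - k, r) = \sum_(j < n.+1) 'C(n + r + 1, j).
Proof.
elim: n => [|n IH]; first by rewrite !big_ord_recl !big_ord0 /= subn0 binn bin0.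
have double : \sum_(k < n.+2) 2 ^ k * 'C(n.+1 + r - k, r)
    = 'C(n.+1 + r, r) + 2 * \sum_(k < n.+1) 2 ^ k * 'C(n + r - k, r).
  rewrite big_ord_recl expn0 mul1n subn0 big_distrr; congr (_ + _).
  by apply: eq_bigr => i _; rewrite /= /bump add1n expnS addSn subSS mulnA.
have pascal : \sum_(j < n.+2) 'C(n.+1 + r + 1, j)
    = 1 + \sum_(j < n.+1) 'C(n + r + 1, j.+1) + \sum_(j < n.+1) 'C(n + r + 1, j).
  by rewrite big_ord_recl bin0 -[RHS]addnA -big_split; congr (_ + _).
have last_term : 1 + \sum_(j < n.+1) 'C(n + r + 1, j.+1)
    = \sum_(j < n.+1) 'C(n + r + 1, j) + 'C(n.+1 + r, r).
  have -> : 'C(n.+1 + r, r) = 'C(n + r + 1, n.+1).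
    by rewrite -(bin_sub (leq_addl n.+1 r)) addnK addSn addn1.
  have first_out : \sum_(j < n.+2) 'C(n + r + 1, j) = 1 + \sum_(j < n.+1) 'C(n + r + 1, j.+1).
    by rewrite big_ord_recl bin0.
  by rewrite -first_out big_ord_recr.
rewrite double IH pascal last_term; lia.
Qed.

Lemma sum_bin_lower_half m : \sum_(j < m.+1) 'C(2 * m + 1, j) = 4 ^ m.
Proof.
have upper_half :
    \sum_(m.+1 <= j < (2 * m + 1).+1) 'C(2 * m + 1, j) = \sum_(j < m.+1) 'C(2 * m + 1, j).
  rewrite big_rev_mkord (_ : _ - m.+1 = m.+1); last by lia.
  by apply: eq_bigr => i _; rewrite subSS bin_sub //; have := ltn_ord i; lia.
have total : \sum_(0 <= j < (2 * m + 1).+1) 'C(2 * m + 1, j) = 2 * 4 ^ m.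
  have <- : (1 + 1) ^ (2 * m + 1) = 2 * 4 ^ m by rewrite expnD expnM mulnC.
  by rewrite expnDn big_mkord; apply: eq_bigr => i _; rewrite !exp1n !muln1.
rewrite (big_cat_nat _ (n := m.+1)) // in total; last by lia.
move: total; rewrite /= upper_half big_mkord addnn -mul2n => /eqP.
by rewrite eqn_pmul2l => // /eqP.
Qed.

Lemma sum_exp2_bin_center m : \sum_(k < m.+1) 2 ^ k * 'C(2 * m - k, m) = 4 ^ m.
Proof.
rewrite -sum_bin_lower_half (_ : 2 * m + 1 = m + m + 1); last by lia.
by rewrite -sum_exp2_bin; apply: eq_bigr => k _; rewrite mul2n addnn.
Qed.

Section ClosedFormStep.

Variable m : nat.

Hypothesis same_closed :
  forall k, k <= m -> meet_pairs m 0 0 k = 2 ^ k * 'C(2 * m - k, m).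
Hypothesis apart_closed : forall D k, 0 < D -> 0 < k ->
  meet_pairs m 0 D k = 2 ^ k.-1 * 'C(2 * m + 1 - k, m + D).

Lemma apart_closedS D k : 0 < D -> 0 < k ->
  meet_pairs m.+1 0 D k = 2 ^ k.-1 * 'C(2 * m.+1 + 1 - k, m.+1 + D).
Proof.
move=> gt0_D; case: k => // k _.
have [lt_m_k|le_k_m] := ltnP m k.
  by rewrite meet_pairs_eq0 // bin_small ?muln0 //; lia.
have -> : 2 * m.+1 + 1 - k.+1 = (2 * m - k).+2 by lia.
have x_eq : 2 * m + 1 - k.+1 = 2 * m - k by lia.
case: D gt0_D => [|[|D]] // _.
  rewrite meet_pairsS_adjacent (@apart_closed 1) // (@apart_closed 2) // same_closed // x_eq /=.
  by rewrite !addn1 addn2 !binS !mulnDr; lia.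
rewrite meet_pairsS_apart !apart_closed // x_eq /=.
by rewrite !addnS !addSn !binS !mulnDr; lia.
Qed.

Lemma same_closedS k : 0 < k -> k <= m.+1 ->
  meet_pairs m.+1 0 0 k = 2 ^ k * 'C(2 * m.+1 - k, m.+1).
Proof.
case: k => // k _ le_k_m; rewrite meet_pairsS_same same_closed // apart_closed //=.
have -> : 2 * m.+1 - k.+1 = (2 * m - k).+1 by lia.
have -> : 2 * m + 1 - k.+1 = 2 * m - k by lia.
by rewrite addn1 binS expnS -mulnA !mulnDr; lia.
Qed.

End ClosedFormStep.

Lemma same_closed0 m :
  (forall k, 0 < k -> k <= m -> meet_pairs m 0 0 k = 2 ^ k * 'C(2 * m - k, m)) ->
  meet_pairs m 0 0 0 = 'C(2 * m, m).
Proof.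
move=> same_closed; have := sum_meet_pairs m 0 0.
rewrite -(sum_exp2_bin_center m) !big_ord_recl expn0 mul1n subn0.
have -> : \sum_(i < m) meet_pairs m 0 0 (lift ord0 i) =
          \sum_(i < m) 2 ^ lift ord0 i * 'C(2 * m - lift ord0 i, m).
  by apply: eq_bigr => i _; rewrite same_closed // lift0.
by move/eqP; rewrite eqn_add2r => /eqP.
Qed.

Lemma meet_pairs_closed m :
  (forall k, k <= m -> meet_pairs m 0 0 k = 2 ^ k * 'C(2 * m - k, m)) /\
  (forall D k, 0 < D -> 0 < k -> meet_pairs m 0 D k = 2 ^ k.-1 * 'C(2 * m + 1 - k, m + D)).
Proof.
elim: m => [|m [same_closed apart_closed]].
  split=> [k|[|D] [|k] //]; rewrite meet_pairs0; first by case: k.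
  by rewrite bin_small ?muln0.
split; last exact: apart_closedS.
have same_closed_pos := same_closedS same_closed apart_closed.
case=> [_|k]; last exact: same_closed_pos.
by rewrite same_closed0 // expn0 mul1n subn0.
Qed.

Theorem theorem3 (n k : nat) (hn : 1 <= n) (hk : k <= n) :
  #|[set PQ : n.-tuple bool * n.-tuple bool |
      common_nonorigin PQ.1 PQ.2 == k]| = 2 ^ k * 'C(2 * n - k, n).
Proof.
rewrite -(meet_pairs_closed n).1 // -sum1_card big_mkcond /meet_pairs pair_bigA /=.
by apply: eq_bigr => [[P Q]] _; rewrite inE common_nonorigin_meetings ?size_tuple.
Qed.
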